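(* (Preservation.) For every typing context $\Gamma$, expressions $e, e'$, type $\tau$ and natural number $n$: if $\Gamma \vdash e : \tau$ and $e \Rightarrow^{n} e'$, then $\Gamma \vdash e' : \tau$.
   Context: This concerns the ''filtered stepper calculus''. Syntax: actions $a ::= \mathsf{skip} \mid \mathsf{step}$; gas $g ::= \mathsf{one} \mid \mathsf{all}$; priorities $l \in \mathbb{N}$. Patterns $p ::= x \mid p(p) \mid \lambda x.p \mid p+p \mid \underline{n} \mid \$e \mid \$v$ (the pattern typing rules also admit $\mathrm{fix}\,x.p$). A filter is a triple $f=(p,a,g)$. Expressions $e ::= x \mid e(e) \mid \lambda x.e \mid \mathrm{fix}\,x.e \mid e+e \mid \underline{n} \mid \mathrm{filter}_f(e) \mid \langle e\rangle^{a,g,l}$ (the last is called a residue), taken up to $\alpha$-equivalence; $\underline{n}$ ranges over numerals. Evaluation contexts $\mathcal{E} ::= \circ \mid \mathcal{E}(e) \mid e(\mathcal{E}) \mid \mathcal{E}+e \mid e+\mathcal{E} \mid \mathrm{filter}_f(\mathcal{E}) \mid \langle \mathcal{E}\rangle^{a,g,l}$, with exactly one hole; $\mathcal{E}[e]$ is the result of plugging $e$ into the hole. The values are exactly $\lambda x.e$ and numerals $\underline{n}$ (fixpoints, filters and residues are never values). Substitution $[v/x]e$ is standard capture-avoiding substitution, which passes through residues unchanged, through filters (substituting also into the filter's pattern), and stops at binders $\lambda x$ and $\mathrm{fix}\,x$ of the same variable. Stripping $|e|$ erases all filter and residue wrappers recursively. Matching $p \triangleright e$ is defined inductively: $\$e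 \triangleright e$ for all $e$; $\$v \triangleright v$ for every value $v$; $\underline{n}\triangleright\underline{n}$; $\lambda x_1.e_1 \triangleright \lambda x_2.e_2$ if $|e_1| \equiv_\alpha |e_2|$; $\mathrm{fix}\,x_1.e_1 \triangleright \mathrm{fix}\,x_2.e_2$ if $|e_1|\equiv_\alpha |e_2|$; $p_1(p_2)\triangleright e_1(e_2)$ if $p_1\triangleright e_1$ and $p_2\triangleright e_2$; $p_1+p_2\triangleright e_1+e_2$ likewise; there are no other rules. Instrumentation $e \to_{p,a,g,l} e'$ is the inductively defined relation: values and variables and $\mathrm{fix}\,x.e$ are left unchanged; $\langle e_0\rangle^{a',g',l'} \to_{p,a,g,l} \langle e\rangle^{a',g',l'}$ if $e_0\to_{p,a,g,l} e$; $\mathrm{filter}_{(p',a',g')}(e_0)\to_{p,a,g,l}\mathrm{filter}_{(p',a',g')}(e')$ if $e_0\to_{p,a,g,l} e$ and $e \to_{p',a',g',l+1} e'$; for $e_1(e_2)$, if $e_1\to_{p,a,g,l} e_1'$ and $e_2\to_{p,a,g,l} e_2'$ then $e_1(e_2)\to_{p,a,g,l}\langle e_1'(e_2')\rangle^{a,g,l}$ when $p\triangleright e_1(e_2)$ and $e_1(e_2)\to_{p,a,g,l} e_1'(e_2')$ when not; identically for $e_1+e_2$. Decomposition $e = \mathcal{E}[e_0]$ (with $e_0$ a redex) is the non-deterministic relation: $\langle v\rangle^{a,g,l}$ and $\mathrm{filter}_f(v)$ with $v$ a value decompose as hole $\circ$ with redex themselves; if $e$ decomposes as $\mathcal{E}$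 and $e_0$ then $\langle e\rangle^{a,g,l}$ decomposes as $\langle\mathcal{E}\rangle^{a,g,l}$ and $e_0$, and $\mathrm{filter}_f(e)$ as $\mathrm{filter}_f(\mathcal{E})$ and $e_0$; $e_1(e_2)$ decomposes as $\mathcal{E}_1(e_2)$ if $e_1$ decomposes as $\mathcal{E}_1$, as $e_1(\mathcal{E}_2)$ if $e_1$ is a value and $e_2$ decomposes as $\mathcal{E}_2$, and as $\circ$ with redex $e_1(e_2)$ if both are values; identically for $e_1+e_2$; $\mathrm{fix}\,x.e$ decomposes as $\circ$ with redex itself. Instruction transitions $e_0 \to e'$: $(\lambda x.e_1)(v)\to [v/x]e_1$ for a value $v$; $\underline{n_1}+\underline{n_2}\to\underline{n_1+n_2}$; $\mathrm{fix}\,x.e\to[\mathrm{fix}\,x.e/x]e$; $\langle v\rangle^{a,g,l}\to v$ and $\mathrm{filter}_f(v)\to v$ for a value $v$. Decay ${\downarrow}\mathcal{E}$ recursively removes every residue with gas $\mathsf{one}$ (replacing $\langle e\rangle^{a,\mathsf{one},l}$ by the decay of $e$), keeps residues with gas $\mathsf{all}$ and filters, applies recursively to all subterms, and maps the hole to the hole. Action selection $(a,l)\vdash\mathcal{E}\Downarrow a'$: $(a,l)\vdash\circ\Downarrow a$; for context nodes of the form application, addition or filter, the judgment passes unchanged into the subcontext containing the hole; $(a_0,l_0)\vdash\langle\mathcal{E}\rangle^{a,g,l}\Downarrow a'$ holds if either $l\le l_0$ and $(a_0,l_0)\vdash\mathcal{E}\Downarrow a'$, or $l>l_0$ and $(a,l)\vdash\mathcal{E}\Downarrow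 a'$. An expression is strippable if it has the form $\mathrm{filter}_f(e)$ or $\langle e\rangle^{a,g,l}$. Filtered stepping $e\Rightarrow^n e'$ is defined inductively: (i) $v\Rightarrow^0 v$ for every value $v$; (ii) if $e\to_{\$e,\mathsf{step},\mathsf{one},0} e_i$, $e_i=\mathcal{E}_0[e_0]$ (decomposition), $e_0\to e_t$, $e_1=({\downarrow}\mathcal{E}_0)[e_t]$, $(\mathsf{step},0)\vdash\mathcal{E}_0\Downarrow\mathsf{step}$ and $e_0$ is not strippable, then $e\Rightarrow^1 e_1$; (iii) with $e_i,\mathcal{E}_0,e_0,e_t,e_1$ as in (ii), if $(\mathsf{step},0)\vdash\mathcal{E}_0\Downarrow\mathsf{skip}$ and $e_1\Rightarrow^n e_2$, then $e\Rightarrow^{n+1}e_2$; (iv) with the same data, if $e_0$ is strippable and $e_1\Rightarrow^n e_2$, then $e\Rightarrow^{n+1}e_2$. Typing: types $\tau ::= \mathbb{N}\mid \tau\to\tau$. $\Gamma\vdash e:\tau$ is given by the usual Curry-style simply-typed rules: variables from $\Gamma$; $\lambda x.e : \tau_x\to\tau_e$ if $\Gamma,x{:}\tau_x\vdash e:\tau_e$; application; numerals have type $\mathbb{N}$; $e_1+e_2:\mathbb{N}$ if both summands have type $\mathbb{N}$; $\mathrm{fix}\,x.e:\tau$ if $\Gamma,x{:}\tau\vdash e:\tau$; $\mathrm{filter}_{(p,a,g)}(e):\tau_e$ if $\Gamma\vdash p:\tau_p$ for some $\tau_p$ and $\Gamma\vdash e:\tau_e$; $\langle e\rangle^{a,g,l}:\tau$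 if $\Gamma\vdash e:\tau$. Pattern typing $\Gamma\vdash p:\tau$: $\$e$ and $\$v$ have every type; variables, $\lambda$, application, numerals, addition and $\mathrm{fix}$ are typed by the analogous rules. *)

(* Filtered stepper calculus, locally nameless-free de Bruijn
   representation (alpha-equivalence = syntactic equality). *)
From Stdlib Require Import Arith List.
Import ListNotations.

Inductive action := Skip | Step.
Inductive gas := One | All.

(* Patterns: variables are de Bruijn indices; PLam / PFix bind index 0. *)
Inductive pat : Type :=
| PVar  : nat -> pat
| PApp  : pat -> pat -> pat
| PLam  : pat -> pat
| PPlus : pat -> pat -> pat
| PNum  : nat -> pat
| PAnyE : pat
| PAnyV : pat
| PFix  : pat -> pat.

(* Expressions; Filter p a g e is filter_(p,a,g)(e), Resid e a g l is <e>^{a,g,l}. *)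
Inductive expr : Type :=
| Var    : nat -> expr
| App    : expr -> expr -> expr
| Lam    : expr -> expr
| Fix    : expr -> expr
| Plus   : expr -> expr -> expr
| Num    : nat -> expr
| Filter : pat -> action -> gas -> expr -> expr
| Resid  : expr -> action -> gas -> nat -> expr.

Definition is_value (e : expr) : Prop :=
  match e with Lam _ | Num _ => True | _ => False end.

Fixpoint strip (e : expr) : expr :=
  match e with
  | Var n => Var n
  | App e1 e2 => App (strip e1) (strip e2)
  | Lam e => Lam (strip e)
  | Fix e => Fix (strip e)
  | Plus e1 e2 => Plus (strip e1) (strip e2)
  | Num n => Num n
  | Filter _ _ _ e => strip e
  | Resid e _ _ _ => strip e
  end.

Fixpoint pat_of_expr (e : expr) : pat :=
  match e with
  | Var n => PVar n
  | App e1 e2 => PApp (pat_of_expr e1) (pat_of_expr e2)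
  | Lam e => PLam (pat_of_expr e)
  | Fix e => PFix (pat_of_expr e)
  | Plus e1 e2 => PPlus (pat_of_expr e1) (pat_of_expr e2)
  | Num n => PNum n
  | Filter _ _ _ e => pat_of_expr e
  | Resid e _ _ _ => pat_of_expr e
  end.

Fixpoint plift (c : nat) (p : pat) : pat :=
  match p with
  | PVar n => if c <=? n then PVar (S n) else PVar n
  | PApp p1 p2 => PApp (plift c p1) (plift c p2)
  | PLam p => PLam (plift (S c) p)
  | PPlus p1 p2 => PPlus (plift c p1) (plift c p2)
  | PNum n => PNum n
  | PAnyE => PAnyE
  | PAnyV => PAnyV
  | PFix p => PFix (plift (S c) p)
  end.

Fixpoint lift (c : nat) (e : expr) : expr :=
  match e with
  | Var n => if c <=? n then Var (S n) else Var n
  | App e1 e2 => App (lift c e1) (lift c e2)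
  | Lam e => Lam (lift (S c) e)
  | Fix e => Fix (lift (S c) e)
  | Plus e1 e2 => Plus (lift c e1) (lift c e2)
  | Num n => Num n
  | Filter p a g e => Filter (plift c p) a g (lift c e)
  | Resid e a g l => Resid (lift c e) a g l
  end.

Fixpoint psubst (k : nat) (s : expr) (p : pat) : pat :=
  match p with
  | PVar n => if n =? k then pat_of_expr s
              else if k <? n then PVar (pred n) else PVar n
  | PApp p1 p2 => PApp (psubst k s p1) (psubst k s p2)
  | PLam p => PLam (psubst (S k) (lift 0 s) p)
  | PPlus p1 p2 => PPlus (psubst k s p1) (psubst k s p2)
  | PNum n => PNum n
  | PAnyE => PAnyE
  | PAnyV => PAnyV
  | PFix p => PFix (psubst (S k) (lift 0 s) p)
  end.

Fixpoint subst (k : nat) (s : expr) (e : expr) : expr :=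
  match e with
  | Var n => if n =? k then s
             else if k <? n then Var (pred n) else Var n
  | App e1 e2 => App (subst k s e1) (subst k s e2)
  | Lam e => Lam (subst (S k) (lift 0 s) e)
  | Fix e => Fix (subst (S k) (lift 0 s) e)
  | Plus e1 e2 => Plus (subst k s e1) (subst k s e2)
  | Num n => Num n
  | Filter p a g e => Filter (psubst k s p) a g (subst k s e)
  | Resid e a g l => Resid (subst k s e) a g l
  end.

Inductive matches : pat -> expr -> Prop :=
| M_anyE : forall e, matches PAnyE e
| M_anyV : forall v, is_value v -> matches PAnyV v
| M_num  : forall n, matches (PNum n) (Num n)
| M_lam  : forall p e, p = pat_of_expr (strip e) -> matches (PLam p) (Lam e)
| M_fix  : forall p e, p = pat_of_expr (strip e) -> matches (PFix p) (Fix e)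
| M_app  : forall p1 p2 e1 e2, matches p1 e1 -> matches p2 e2 ->
           matches (PApp p1 p2) (App e1 e2)
| M_plus : forall p1 p2 e1 e2, matches p1 e1 -> matches p2 e2 ->
           matches (PPlus p1 p2) (Plus e1 e2).

Inductive instr : pat -> action -> gas -> nat -> expr -> expr -> Prop :=
| I_val : forall p a g l v, is_value v -> instr p a g l v v
| I_var : forall p a g l n, instr p a g l (Var n) (Var n)
| I_fix : forall p a g l e, instr p a g l (Fix e) (Fix e)
| I_resid : forall p a g l e0 e a' g' l',
    instr p a g l e0 e -> instr p a g l (Resid e0 a' g' l') (Resid e a' g' l')
| I_filter : forall p a g l e0 e e' p' a' g',
    instr p a g l e0 e -> instr p' a' g' (S l) e e' ->
    instr p a g l (Filter p' a' g' e0) (Filter p' a' g' e')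
| I_app_m : forall p a g l e1 e2 e1' e2',
    instr p a g l e1 e1' -> instr p a g l e2 e2' -> matches p (App e1 e2) ->
    instr p a g l (App e1 e2) (Resid (App e1' e2') a g l)
| I_app_n : forall p a g l e1 e2 e1' e2',
    instr p a g l e1 e1' -> instr p a g l e2 e2' -> ~ matches p (App e1 e2) ->
    instr p a g l (App e1 e2) (App e1' e2')
| I_plus_m : forall p a g l e1 e2 e1' e2',
    instr p a g l e1 e1' -> instr p a g l e2 e2' -> matches p (Plus e1 e2) ->
    instr p a g l (Plus e1 e2) (Resid (Plus e1' e2') a g l)
| I_plus_n : forall p a g l e1 e2 e1' e2',
    instr p a g l e1 e1' -> instr p a g l e2 e2' -> ~ matches p (Plus e1 e2) ->
    instr p a g l (Plus e1 e2) (Plus e1' e2').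

Inductive ctx : Type :=
| Hole   : ctx
| CAppL  : ctx -> expr -> ctx
| CAppR  : expr -> ctx -> ctx
| CPlusL : ctx -> expr -> ctx
| CPlusR : expr -> ctx -> ctx
| CFilter : pat -> action -> gas -> ctx -> ctx
| CResid : ctx -> action -> gas -> nat -> ctx.

Fixpoint plug (E : ctx) (e : expr) : expr :=
  match E with
  | Hole => e
  | CAppL E e2 => App (plug E e) e2
  | CAppR e1 E => App e1 (plug E e)
  | CPlusL E e2 => Plus (plug E e) e2
  | CPlusR e1 E => Plus e1 (plug E e)
  | CFilter p a g E => Filter p a g (plug E e)
  | CResid E a g l => Resid (plug E e) a g l
  end.

Inductive decomp : expr -> ctx -> expr -> Prop :=
| D_resid_v : forall v a g l, is_value v -> decomp (Resid v a g l) Hole (Resid v a g l)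
| D_filter_v : forall p a g v, is_value v -> decomp (Filter p a g v) Hole (Filter p a g v)
| D_resid : forall e E e0 a g l, decomp e E e0 -> decomp (Resid e a g l) (CResid E a g l) e0
| D_filter : forall p a g e E e0, decomp e E e0 -> decomp (Filter p a g e) (CFilter p a g E) e0
| D_appL : forall e1 e2 E e0, decomp e1 E e0 -> decomp (App e1 e2) (CAppL E e2) e0
| D_appR : forall e1 e2 E e0, is_value e1 -> decomp e2 E e0 -> decomp (App e1 e2) (CAppR e1 E) e0
| D_app : forall e1 e2, is_value e1 -> is_value e2 -> decomp (App e1 e2) Hole (App e1 e2)
| D_plusL : forall e1 e2 E e0, decomp e1 E e0 -> decomp (Plus e1 e2) (CPlusL E e2) e0
| D_plusR : forall e1 e2 E e0, is_value e1 -> decomp e2 E e0 -> decomp (Plus e1 e2) (CPlusR e1 E) e0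
| D_plus : forall e1 e2, is_value e1 -> is_value e2 -> decomp (Plus e1 e2) Hole (Plus e1 e2)
| D_fix : forall e, decomp (Fix e) Hole (Fix e).

Inductive istep : expr -> expr -> Prop :=
| S_beta : forall e v, is_value v -> istep (App (Lam e) v) (subst 0 v e)
| S_plus : forall n1 n2, istep (Plus (Num n1) (Num n2)) (Num (n1 + n2))
| S_fix : forall e, istep (Fix e) (subst 0 (Fix e) e)
| S_resid : forall v a g l, is_value v -> istep (Resid v a g l) v
| S_filter : forall p a g v, is_value v -> istep (Filter p a g v) v.

Fixpoint decay_e (e : expr) : expr :=
  match e with
  | Var n => Var n
  | App e1 e2 => App (decay_e e1) (decay_e e2)
  | Lam e => Lam (decay_e e)
  | Fix e => Fix (decay_e e)
  | Plus e1 e2 => Plus (decay_e e1) (decay_e e2)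
  | Num n => Num n
  | Filter p a g e => Filter p a g (decay_e e)
  | Resid e a One l => decay_e e
  | Resid e a All l => Resid (decay_e e) a All l
  end.

Fixpoint decay (E : ctx) : ctx :=
  match E with
  | Hole => Hole
  | CAppL E e2 => CAppL (decay E) (decay_e e2)
  | CAppR e1 E => CAppR (decay_e e1) (decay E)
  | CPlusL E e2 => CPlusL (decay E) (decay_e e2)
  | CPlusR e1 E => CPlusR (decay_e e1) (decay E)
  | CFilter p a g E => CFilter p a g (decay E)
  | CResid E a One l => decay E
  | CResid E a All l => CResid (decay E) a All l
  end.

Inductive select : action -> nat -> ctx -> action -> Prop :=
| Sel_hole : forall a l, select a l Hole a
| Sel_appL : forall a l E e a', select a l E a' -> select a l (CAppL E e) a'
| Sel_appR : forall a l E e a', select a l E a' -> select a l (CAppR e E) a'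
| Sel_plusL : forall a l E e a', select a l E a' -> select a l (CPlusL E e) a'
| Sel_plusR : forall a l E e a', select a l E a' -> select a l (CPlusR e E) a'
| Sel_filter : forall a l p af gf E a', select a l E a' -> select a l (CFilter p af gf E) a'
| Sel_resid_le : forall a0 l0 E a g l a', l <= l0 -> select a0 l0 E a' ->
    select a0 l0 (CResid E a g l) a'
| Sel_resid_gt : forall a0 l0 E a g l a', l > l0 -> select a l E a' ->
    select a0 l0 (CResid E a g l) a'.

Definition strippable (e : expr) : Prop :=
  match e with Filter _ _ _ _ | Resid _ _ _ _ => True | _ => False end.

Inductive fstep : expr -> nat -> expr -> Prop :=
| FS_val : forall v, is_value v -> fstep v 0 v
| FS_step : forall e ei E0 e0 et,
    instr PAnyE Step One 0 e ei -> decomp ei E0 e0 -> istep e0 et ->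
    select Step 0 E0 Step -> ~ strippable e0 ->
    fstep e 1 (plug (decay E0) et)
| FS_skip : forall e ei E0 e0 et n e2,
    instr PAnyE Step One 0 e ei -> decomp ei E0 e0 -> istep e0 et ->
    select Step 0 E0 Skip -> fstep (plug (decay E0) et) n e2 ->
    fstep e (S n) e2
| FS_strip : forall e ei E0 e0 et n e2,
    instr PAnyE Step One 0 e ei -> decomp ei E0 e0 -> istep e0 et ->
    strippable e0 -> fstep (plug (decay E0) et) n e2 ->
    fstep e (S n) e2.

(* types and typing (contexts are lists indexed by de Bruijn indices) *)
Inductive ty : Type := TNat | TArr : ty -> ty -> ty.

Inductive pat_type : list ty -> pat -> ty -> Prop :=
| PT_anyE : forall G t, pat_type G PAnyE t
| PT_anyV : forall G t, pat_type G PAnyV t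
| PT_var : forall G n t, nth_error G n = Some t -> pat_type G (PVar n) t
| PT_lam : forall G p tx te, pat_type (tx :: G) p te -> pat_type G (PLam p) (TArr tx te)
| PT_app : forall G p1 p2 t1 t2, pat_type G p1 (TArr t1 t2) -> pat_type G p2 t1 ->
    pat_type G (PApp p1 p2) t2
| PT_num : forall G n, pat_type G (PNum n) TNat
| PT_plus : forall G p1 p2, pat_type G p1 TNat -> pat_type G p2 TNat ->
    pat_type G (PPlus p1 p2) TNat
| PT_fix : forall G p t, pat_type (t :: G) p t -> pat_type G (PFix p) t.

Inductive has_type : list ty -> expr -> ty -> Prop :=
| T_var : forall G n t, nth_error G n = Some t -> has_type G (Var n) t
| T_lam : forall G e tx te, has_type (tx :: G) e te -> has_type G (Lam e) (TArr tx te)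
| T_app : forall G e1 e2 t1 t2, has_type G e1 (TArr t1 t2) -> has_type G e2 t1 ->
    has_type G (App e1 e2) t2
| T_num : forall G n, has_type G (Num n) TNat
| T_plus : forall G e1 e2, has_type G e1 TNat -> has_type G e2 TNat ->
    has_type G (Plus e1 e2) TNat
| T_fix : forall G e t, has_type (t :: G) e t -> has_type G (Fix e) t
| T_filter : forall G p a g e tp te, pat_type G p tp -> has_type G e te ->
    has_type G (Filter p a g e) te
| T_resid : forall G e a g l t, has_type G e t -> has_type G (Resid e a g l) t.

From Stdlib Require Import List Arith Lia.

(* Each filtered step instruments the term, which only inserts residues, fires
   an instruction inside an evaluation context and then decays that context,
   which only removes residues.  Residues are transparent to typing, so the
   type is preserved as soon as instructions preserve types (substitution
   lemma) and a context can be refilled with any term of the hole's type.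
   Filters carry typed patterns into which substitution also reaches, so
   weakening and substitution must cover patterns too. *)

Section InsertNth.

Variable A : Type.

Lemma nth_error_insert_lt (D G : list A) x n :
  n < length D -> nth_error (D ++ x :: G) n = nth_error (D ++ G) n.
Proof. intros Hn. rewrite !nth_error_app1 by exact Hn. reflexivity. Qed.

Lemma nth_error_insert_middle (D G : list A) x :
  nth_error (D ++ x :: G) (length D) = Some x.
Proof. rewrite nth_error_app2, Nat.sub_diag by lia. reflexivity. Qed.

Lemma nth_error_insert_ge (D G : list A) x n :
  length D <= n -> nth_error (D ++ x :: G) (S n) = nth_error (D ++ G) n.
Proof.
  intros Hn. rewrite !nth_error_app2 by lia.
  replace (S n - length D) with (S (n - length D)) by lia. reflexivity.
Qed.

Lemma nth_error_remove (D G : list A) x n : n <> length D ->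
  nth_error (D ++ x :: G) n
  = nth_error (D ++ G) (if length D <? n then pred n else n).
Proof.
  intros Hn. destruct (Nat.ltb_spec (length D) n).
  - destruct n as [|m]; [lia|]. apply nth_error_insert_ge. lia.
  - apply nth_error_insert_lt. lia.
Qed.

End InsertNth.

Lemma pat_type_weaken D G x p t :
  pat_type (D ++ G) p t -> pat_type (D ++ x :: G) (plift (length D) p) t.
Proof.
  remember (D ++ G) as G0 eqn:HG0. intros Hp. revert D HG0.
  induction Hp; intros D ->; simpl; try (econstructor; eauto; fail).
  - destruct (Nat.leb_spec (length D) n); constructor.
    + rewrite nth_error_insert_ge; assumption.
    + rewrite nth_error_insert_lt; assumption.
  - constructor. apply (IHHp (tx :: D)). reflexivity.
  - constructor. apply (IHHp (t :: D)). reflexivity.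
Qed.

Lemma has_type_weaken D G x e t :
  has_type (D ++ G) e t -> has_type (D ++ x :: G) (lift (length D) e) t.
Proof.
  remember (D ++ G) as G0 eqn:HG0. intros He. revert D HG0.
  induction He; intros D ->; simpl; eauto using has_type, pat_type_weaken.
  - destruct (Nat.leb_spec (length D) n); constructor.
    + rewrite nth_error_insert_ge; assumption.
    + rewrite nth_error_insert_lt; assumption.
  - constructor. apply (IHHe (tx :: D)). reflexivity.
  - constructor. apply (IHHe (t :: D)). reflexivity.
Qed.

Lemma has_type_lift0 G x e t : has_type G e t -> has_type (x :: G) (lift 0 e) t.
Proof. exact (has_type_weaken nil G x e t). Qed.

Lemma pat_type_pat_of_expr G e t : has_type G e t -> pat_type G (pat_of_expr e) t.
Proof. induction 1; simpl; eauto using pat_type. Qed.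

Lemma pat_type_subst D G u s p t :
  pat_type (D ++ u :: G) p t -> has_type (D ++ G) s u ->
  pat_type (D ++ G) (psubst (length D) s p) t.
Proof.
  remember (D ++ u :: G) as G0 eqn:HG0. intros Hp. revert D s HG0.
  induction Hp; intros D s -> Hs; simpl; try (econstructor; eauto; fail).
  - destruct (Nat.eqb_spec n (length D)) as [-> | Hn].
    + rewrite nth_error_insert_middle in H. injection H as <-.
      apply pat_type_pat_of_expr. exact Hs.
    + rewrite nth_error_remove in H by exact Hn.
      destruct (length D <? n); constructor; exact H.
  - constructor. apply (IHHp (tx :: D)); [reflexivity | apply has_type_lift0, Hs].
  - constructor. apply (IHHp (t :: D)); [reflexivity | apply has_type_lift0, Hs].
Qed.

Lemma has_type_subst D G u s e t :
  has_type (D ++ u :: G) e t -> has_type (D ++ G) s u ->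
  has_type (D ++ G) (subst (length D) s e) t.
Proof.
  remember (D ++ u :: G) as G0 eqn:HG0. intros He. revert D s HG0.
  induction He; intros D s -> Hs; simpl; eauto using has_type, pat_type_subst.
  - destruct (Nat.eqb_spec n (length D)) as [-> | Hn].
    + rewrite nth_error_insert_middle in H. injection H as <-. exact Hs.
    + rewrite nth_error_remove in H by exact Hn.
      destruct (length D <? n); constructor; exact H.
  - constructor. apply (IHHe (tx :: D)); [reflexivity | apply has_type_lift0, Hs].
  - constructor. apply (IHHe (t :: D)); [reflexivity | apply has_type_lift0, Hs].
Qed.

Lemma has_type_subst0 G u s e t :
  has_type (u :: G) e t -> has_type G s u -> has_type G (subst 0 s e) t.
Proof. exact (has_type_subst nil G u s e t). Qed.

Lemma instr_preserves_type p a g l e ei G t :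
  instr p a g l e ei -> has_type G e t -> has_type G ei t.
Proof.
  intros Hi. revert G t.
  induction Hi; intros G t Ht; auto; inversion Ht; subst; eauto using has_type.
Qed.

Lemma istep_preserves_type e et G t :
  istep e et -> has_type G e t -> has_type G et t.
Proof.
  intros Hs Ht. destruct Hs; inversion Ht; subst.
  - match goal with Hf : has_type _ (Lam _) _ |- _ => inversion Hf; subst end.
    eapply has_type_subst0; eassumption.
  - constructor.
  - eapply has_type_subst0; eassumption.
  - assumption.
  - assumption.
Qed.

Lemma decomp_plug e E e0 : decomp e E e0 -> e = plug E e0.
Proof. induction 1; simpl; congruence. Qed.

Lemma has_type_plug_replace E G e0 t :
  has_type G (plug E e0) t ->
  exists t0, has_type G e0 t0 /\
             forall e', has_type G e' t0 -> has_type G (plug E e') t.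
Proof.
  revert t. induction E; simpl; intros t Ht.
  { exists t. split; auto. }
  all: inversion Ht; subst; edestruct IHE as (t0 & He0 & Hrepl); [eassumption|];
    exists t0; split; [exact He0 | intros; eauto using has_type].
Qed.

Lemma decay_e_preserves_type G e t : has_type G e t -> has_type G (decay_e e) t.
Proof. induction 1; simpl; eauto using has_type. destruct g; eauto using has_type. Qed.

Lemma decay_preserves_type E G e t :
  has_type G (plug E e) t -> has_type G (plug (decay E) e) t.
Proof.
  revert t. induction E; simpl; intros t Ht; auto;
    inversion Ht; subst; eauto using has_type, decay_e_preserves_type.
  destruct g; simpl; eauto using has_type.
Qed.

Lemma filtered_transition_preserves_type e ei E0 e0 et G t :
  instr PAnyE Step One 0 e ei -> decomp ei E0 e0 -> istep e0 et ->
  has_type G e t -> has_type G (plug (decay E0) et) t.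
Proof.
  intros Hi Hd Hs Ht. apply decay_preserves_type.
  assert (Hei : has_type G (plug E0 e0) t).
  { rewrite <- (decomp_plug _ _ _ Hd). exact (instr_preserves_type _ _ _ _ _ _ _ _ Hi Ht). }
  destruct (has_type_plug_replace _ _ _ _ Hei) as (t0 & He0 & Hrepl).
  apply Hrepl. exact (istep_preserves_type _ _ _ _ Hs He0).
Qed.

Theorem theorem1 :
  forall (G : list ty) (e e' : expr) (t : ty) (n : nat),
    has_type G e t -> fstep e n e' -> has_type G e' t.
Proof.
  intros G e e' t n Ht Hf. revert t Ht.
  induction Hf; intros t Ht; eauto using filtered_transition_preserves_type.
Qed.
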